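(* Let $R$ be a commutative ring with identity and $M$ a non-zero comultiplication $R$-module with $\mathrm{Min}(M)=\{S_i\}_{i\in I}$, where $|I|>1$ and the $S_i$ are pairwise distinct. If $\Lambda$ is a non-empty proper finite subset of $I$, then $\sum_{\lambda\in\Lambda}S_\lambda$ is a non-large submodule of $M$.
   Context: An $R$-module $M$ is a comultiplication module if for every submodule $N$ of $M$ there is an ideal $I$ of $R$ with $N=\mathrm{Ann}_M(I)=\{m\in M: Im=0\}$. A submodule $N$ of $M$ is large (essential) in $M$ if $N\cap L\neq 0$ for every non-zero submodule $L$ of $M$. $\mathrm{Min}(M)$ denotes the set of minimal (i.e. simple) submodules of $M$. *)

From HB Require Import structures.
From mathcomp Require Import all_boot all_order all_algebra.
Set Implicit Arguments. Unset Strict Implicit. Unset Printing Implicit Defensive.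
Import GRing.Theory.
Local Open Scope ring_scope.

Section ModDefs.
Variables (R : comPzRingType) (M : lmodType R).

Definition submodule (N : M -> Prop) : Prop :=
  [/\ N 0, (forall x y, N x -> N y -> N (x + y)) &
      (forall (r : R) x, N x -> N (r *: x))].

Definition ideal (I : R -> Prop) : Prop :=
  [/\ I 0, (forall a b, I a -> I b -> I (a + b)) &
      (forall r a, I a -> I (r * a))].

Definition AnnM (I : R -> Prop) : M -> Prop :=
  fun m => forall r, I r -> r *: m = 0.

Definition same_sub (N L : M -> Prop) : Prop := forall m, N m <-> L m.

Definition comultiplication_module : Prop :=
  forall N, submodule N -> exists I, ideal I /\ same_sub N (AnnM I).

Definition nonzero_sub (N : M -> Prop) : Prop := exists x, N x /\ x <> 0.

Definition large (N : M -> Prop) : Prop :=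
  submodule N /\
  forall L, submodule L -> nonzero_sub L -> exists x, [/\ N x, L x & x <> 0].

Definition minimal_sub (S : M -> Prop) : Prop :=
  [/\ submodule S, nonzero_sub S &
      forall L, submodule L -> (forall x, L x -> S x) ->
                same_sub L (fun x => x = 0) \/ same_sub L S].

Definition sum_sub (N L : M -> Prop) : M -> Prop :=
  fun m => exists x y, [/\ N x, L y & m = x + y].

Fixpoint sum_list_sub (Ss : seq (M -> Prop)) : M -> Prop :=
  match Ss with
  | [::] => fun m => m = 0
  | S0 :: Ss' => sum_sub S0 (sum_list_sub Ss')
  end.

End ModDefs.

From Stdlib Require Lists.List.
From Stdlib Require Import Classical.
From HB Require Import structures.
From mathcomp Require Import all_boot all_order all_algebra.
Set Implicit Arguments.
Unset Strict Implicit.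
Unset Printing Implicit Defensive.
Import GRing.Theory.
Local Open Scope ring_scope.

(* In a comultiplication module every submodule is an annihilator, so for two
   distinct minimal submodules S_i and S_j some scalar r kills S_i but not S_j;
   by minimality r then acts injectively on S_j.  The product of such scalars
   over i in Lam kills the sum of the S_i and is injective on S_j for some j
   outside Lam, so the sum meets S_j trivially and cannot be large. *)

Section Annihilators.
Variables (R : comPzRingType) (M : lmodType R).

Definition annihilates (r : R) (N : M -> Prop) : Prop :=
  forall y, N y -> r *: y = 0.

Definition regular_on (r : R) (N : M -> Prop) : Prop :=
  forall x, N x -> x <> 0 -> r *: x <> 0.

Lemma scalerAC (a b : R) (x : M) : a *: (b *: x) = b *: (a *: x).
Proof. by rewrite !scalerA mulrC. Qed.

Lemma submodule_kernel_scale (r : R) (N : M -> Prop) :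
  submodule N -> submodule (fun y => N y /\ r *: y = 0).
Proof.
case=> N0 ND NZ; split.
- by rewrite scaler0.
- by move=> x y [Nx rx] [Ny ry]; rewrite scalerDr rx ry addr0; split=> //; exact: ND.
- by move=> s x [Nx rx]; rewrite scalerAC rx scaler0; split=> //; exact: NZ.
Qed.

Lemma minimal_regular_on (r : R) (S : M -> Prop) :
  minimal_sub S -> (exists y, S y /\ r *: y <> 0) -> regular_on r S.
Proof.
case=> subS _ minS [y [Sy ry]] x Sx x0 rx.
have [ker0 | kerS] := minS _ (submodule_kernel_scale r subS) (fun z => @proj1 _ _).
  by apply: x0; apply/ker0.
by apply: ry; case/kerS: Sy.
Qed.

Lemma comultiplication_separates (N L : M -> Prop) :
  comultiplication_module M -> submodule N -> (exists y, L y /\ ~ N y) ->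
  exists r, annihilates r N /\ exists y, L y /\ r *: y <> 0.
Proof.
move=> comul subN [y [Ly Ny]].
have [J [_ NJ]] := comul _ subN.
have [r Jry] : exists r, ~ (J r -> r *: y = 0).
  by apply: not_all_ex_not => yJ; apply: Ny; apply/NJ.
have [Jr ry] := imply_to_and _ _ Jry.
by exists r; split; [move=> z /NJ; apply | exists y].
Qed.

Lemma minimal_sub_not_subset (S T : M -> Prop) :
  minimal_sub S -> minimal_sub T -> ~ same_sub S T -> exists y, T y /\ ~ S y.
Proof.
case=> subS _ minS [subT [x [Tx x0]] _] ST.
apply: NNPP => noy.
have TS : forall y, T y -> S y.
  by move=> y Ty; apply: NNPP => Sy; apply: noy; exists y.
have [T0 | TeqS] := minS T subT TS.
  by apply: x0; apply/T0.
by apply: ST => z; split => /TeqS.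
Qed.

Lemma annihilates_sum_sub (r s : R) (N L : M -> Prop) :
  annihilates r N -> annihilates s L -> annihilates (r * s) (sum_sub N L).
Proof.
move=> rN sL _ [x [y [Nx Ly ->]]].
by rewrite -scalerA scalerDr (sL y) // addr0 scalerAC rN // scaler0.
Qed.

Lemma regular_on_mul (r s : R) (S : M -> Prop) :
  submodule S -> regular_on r S -> regular_on s S -> regular_on (r * s) S.
Proof.
case=> _ _ SZ rS sS x Sx x0.
by rewrite -scalerA; apply: rS (sS x Sx x0); exact: SZ.
Qed.

Lemma large_not_annihilated (r : R) (N S : M -> Prop) :
  large N -> minimal_sub S -> annihilates r N -> ~ regular_on r S.
Proof.
case=> _ meet [subS nzS _] rN rS.
have [x [Nx Sx x0]] := meet S subS nzS.
exact: rS x Sx x0 (rN x Nx).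
Qed.

End Annihilators.

Section MinimalSubmodules.
Variables (R : comPzRingType) (M : lmodType R) (I : Type) (S : I -> M -> Prop).
Hypotheses (comul : comultiplication_module M)
  (Smin : forall i, minimal_sub (S i))
  (Sdist : forall i j, i <> j -> ~ same_sub (S i) (S j)).

Lemma separate_minimal_sub (i j : I) :
  i <> j -> exists r : R, annihilates r (S i) /\ regular_on r (S j).
Proof.
move=> ij; have [subSi _ _] := Smin i.
have [r [rSi rSj]] := comultiplication_separates comul subSi
  (minimal_sub_not_subset (Smin i) (Smin j) (Sdist ij)).
by exists r; split=> //; exact: minimal_regular_on.
Qed.

Lemma separate_sum_list_sub (Lam : seq I) (j : I) :
  ~ List.In j Lam ->
  exists r : R, annihilates r (sum_list_sub [seq S l | l <- Lam]) /\
                regular_on r (S j).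
Proof.
elim: Lam => [|i Lam IH] /= jLam.
  by exists 1; split=> [y -> | x _ x0]; rewrite ?scaler0 ?scale1r.
have [r [rSi rSj]] := separate_minimal_sub (fun ij => jLam (or_introl ij)).
have [s [sSum sSj]] := IH (fun jL => jLam (or_intror jL)).
have [subSj _ _] := Smin j.
exists (r * s); split; first exact: annihilates_sum_sub.
exact: regular_on_mul.
Qed.

End MinimalSubmodules.

Theorem lemma2p3 (R : comPzRingType) (M : lmodType R)
  (I : Type) (S : I -> M -> Prop)
  (hM0 : exists m : M, m <> 0)
  (hcomul : comultiplication_module M)
  (hSmin : forall i, minimal_sub (S i))
  (hSall : forall N, minimal_sub N -> exists i, same_sub N (S i))
  (hSdist : forall i j, i <> j -> ~ same_sub (S i) (S j))
  (hI : exists i j : I, i <> j)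
  (Lam : seq I)
  (hLne : Lam <> [::])
  (hLprop : exists i, ~ Stdlib.Lists.List.In i Lam) :
  ~ large (sum_list_sub [seq S l | l <- Lam]).
Proof.
case: hLprop => j jLam large_sum.
have [r [rSum rSj]] := separate_sum_list_sub hcomul hSmin hSdist jLam.
exact: large_not_annihilated large_sum (hSmin j) rSum rSj.
Qed.
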